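(* Suppose the family of update functions $\mathrm{Upd}$ satisfies P1, P3 and P4. Let $\mathcal{M}=(W,\mathcal{F})$ be a measure space, $\Pr\in\Delta_{\mathcal{M}}$, and $A\subseteq B$ with $A,B\in\mathcal{F}$. If $\Pr(A|B)=1$ (respectively $\Pr(A|B)=0$), then $\Pr'(A)=1$ (respectively $\Pr'(A)=0$) for all $\Pr'\in\mathrm{Upd}^{\mathcal{M}}(\Pr,B)$.
   Context: A measure space is a pair $\mathcal{M}=(W,\mathcal{F})$ with $\mathcal{F}$ an algebra of subsets of $W$; $\Delta_{\mathcal{M}}$ is the set of all probability measures on $\mathcal{M}$. An update function on $\mathcal{M}$ is a map $\mathrm{Upd}^{\mathcal{M}}:2^{\Delta_{\mathcal{M}}}\times\mathcal{F}\to 2^{\Delta_{\mathcal{M}}}$ such that $\mathrm{Upd}^{\mathcal{M}}(X,B)=\emptyset$ whenever $\Pr(B)=0$ for all $\Pr\in X$; $\mathrm{Upd}^{\mathcal{M}}(\Pr,B)$ means $\mathrm{Upd}^{\mathcal{M}}(\{\Pr\},B)$. A family $\mathrm{Upd}=\{\mathrm{Upd}^{\mathcal{M}}\}$ has one update function for each measure space. $\Pr(A|B)=\Pr(A\cap B)/\Pr(B)$. Postulates (for all $\mathcal{M}=(W,\mathcal{F})$, $X\subseteq\Delta_{\mathcal{M}}$, $B,C\in\mathcal{F}$): P1: $\mathrm{Upd}^{\mathcal{M}}(X,B)\subseteq\{\Pr\in\Delta_{\mathcal{M}}:\Pr(B)=1\}$. P3: $\mathrm{Upd}^{\mathcal{M}}(\mathrm{Upd}^{\mathcal{M}}(X,B),C)=\mathrm{Upd}^{\mathcal{M}}(X,B\cap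 C)$. P4: $\mathrm{Upd}^{\mathcal{M}}(X,B)=X$ if $\Pr(B)=1$ for all $\Pr\in X$. *)

From Stdlib Require Import Reals.
Open Scope R_scope.

Record algebra (W : Type) := {
  amem : (W -> Prop) -> Prop;
  alg_full : amem (fun _ => True);
  alg_compl : forall A, amem A -> amem (fun w => ~ A w);
  alg_union : forall A B, amem A -> amem B -> amem (fun w => A w \/ B w)
}.
Arguments amem {W} a _.

Record MeasureSpace := {
  carrier : Type;
  msalg : algebra carrier
}.

Definition inF (M : MeasureSpace) (A : carrier M -> Prop) : Prop :=
  amem (msalg M) A.

(* It is
   represented as a function on all subsets of W which is 0 off F, so that
   elements of Delta_M correspond exactly to probability measures on F. *)
Record prob (M : MeasureSpace) := {
  pfun :> (carrier M -> Prop) -> R;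
  p_off : forall A, ~ inF M A -> pfun A = 0;
  p_nonneg : forall A, inF M A -> 0 <= pfun A;
  p_full : pfun (fun _ => True) = 1;
  p_add : forall A B, inF M A -> inF M B -> (forall w, ~ (A w /\ B w)) ->
            pfun (fun w => A w \/ B w) = pfun A + pfun B
}.

Definition cond {M : MeasureSpace} (P : prob M) (A B : carrier M -> Prop) : R :=
  P (fun w => A w /\ B w) / P B.

Definition single {M : MeasureSpace} (P : prob M) : prob M -> Prop :=
  fun Q => Q = P.

(* A family of update functions: one map 2^Delta_M x F -> 2^Delta_M per
   measure space (values at non-measurable B are irrelevant). *)
Definition UpdFamily : Type :=
  forall M : MeasureSpace, (prob M -> Prop) -> (carrier M -> Prop) -> (prob M -> Prop).

Definition is_update_family (Upd : UpdFamily) : Prop :=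
  forall (M : MeasureSpace) (X : prob M -> Prop) (B : carrier M -> Prop),
    inF M B -> (forall P, X P -> P B = 0) -> Upd M X B = (fun _ => False).

Definition P1 (Upd : UpdFamily) : Prop :=
  forall (M : MeasureSpace) (X : prob M -> Prop) (B : carrier M -> Prop),
    inF M B -> forall Q, Upd M X B Q -> Q B = 1.

Definition P3 (Upd : UpdFamily) : Prop :=
  forall (M : MeasureSpace) (X : prob M -> Prop) (B C : carrier M -> Prop),
    inF M B -> inF M C ->
    Upd M (Upd M X B) C = Upd M X (fun w => B w /\ C w).

Definition P4 (Upd : UpdFamily) : Prop :=
  forall (M : MeasureSpace) (X : prob M -> Prop) (B : carrier M -> Prop),
    inF M B -> (forall P, X P -> P B = 1) -> Upd M X B = X.

(* By P3 and P4, conditioning on B gives the same result as conditioning on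
   C ∩ B for any C of probability 1, since Pr is unchanged by first updating on C.
   If Pr(A|B) = 1, take C = A ∪ ¬B: then C ∩ B = A and P1 forces Pr'(A) = 1.
   If Pr(A|B) = 0, take C = ¬A: then P1 gives Pr'(¬A ∩ B) = 1, so Pr'(A) = 0.
   When Pr(B) = 0 the update is empty and there is nothing to prove. *)

From Stdlib Require Import Reals Lra FunctionalExtensionality PropExtensionality.
Open Scope R_scope.

Lemma set_ext {W : Type} (A B : W -> Prop) : (forall w, A w <-> B w) -> A = B.
Proof.
  intro H; extensionality w; apply propositional_extensionality; auto.
Qed.

Lemma inF_compl M A : inF M A -> inF M (fun w => ~ A w).
Proof. apply alg_compl. Qed.

Lemma inF_union M A B : inF M A -> inF M B -> inF M (fun w => A w \/ B w).
Proof. apply alg_union. Qed.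

Lemma inF_inter M A B : inF M A -> inF M B -> inF M (fun w => A w /\ B w).
Proof.
  intros HA HB.
  replace (fun w => A w /\ B w) with (fun w => ~ (~ A w \/ ~ B w)).
  - apply inF_compl, inF_union; apply inF_compl; assumption.
  - apply set_ext; intro w; tauto.
Qed.

Section ProbabilityFacts.

Variables (M : MeasureSpace) (P : prob M).

Lemma prob_compl A : inF M A -> P (fun w => ~ A w) = 1 - P A.
Proof.
  intro HA.
  assert (Hsplit : P (fun w => A w \/ ~ A w) = P A + P (fun w => ~ A w)).
  { apply p_add; [assumption | apply inF_compl; assumption | tauto]. }
  replace (fun w => A w \/ ~ A w) with (fun _ : carrier M => True) in Hsplit.
  - rewrite p_full in Hsplit; lra.
  - apply set_ext; intro w; tauto.
Qed.

Lemma prob_le_1 A : inF M A -> P A <= 1.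
Proof.
  intro HA; pose proof (p_nonneg _ P _ (inF_compl M A HA)) as Hc.
  rewrite prob_compl in Hc by assumption; lra.
Qed.

Lemma prob_disjoint_of_full D E : inF M D -> inF M E ->
  (forall w, ~ (D w /\ E w)) -> P D = 1 -> P E = 0.
Proof.
  intros HD HE Hdisj HPD.
  pose proof (prob_le_1 _ (inF_union M D E HD HE)) as Hle.
  rewrite p_add in Hle by assumption.
  pose proof (p_nonneg _ P E HE); lra.
Qed.

Lemma cond_subset A B : (forall w, A w -> B w) -> cond P A B = P A / P B.
Proof.
  intro HAB; unfold cond; f_equal; f_equal.
  apply set_ext; intro w; split; [tauto | intro; auto].
Qed.

End ProbabilityFacts.

Lemma single_full M (Pr : prob M) C : Pr C = 1 -> forall P, single Pr P -> P C = 1.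
Proof. intros HC P HP; unfold single in HP; subst; assumption. Qed.

Lemma upd_single_null (Upd : UpdFamily) (HU : is_update_family Upd)
  M (Pr : prob M) B : inF M B -> Pr B = 0 -> Upd M (single Pr) B = fun _ => False.
Proof.
  intros HB H0; apply HU; [assumption |].
  intros P HP; unfold single in HP; subst; assumption.
Qed.

Section UpdateFacts.

Variables (Upd : UpdFamily) (H1 : P1 Upd) (H3 : P3 Upd) (H4 : P4 Upd).

Lemma upd_inter_full M (X : prob M -> Prop) B C : inF M B -> inF M C ->
  (forall P, X P -> P C = 1) -> Upd M X B = Upd M X (fun w => C w /\ B w).
Proof.
  intros HB HC HXC.
  rewrite <- (H3 M X C B HC HB), (H4 M X C HC HXC); reflexivity.
Qed.

Variables (M : MeasureSpace) (Pr : prob M) (A B : carrier M -> Prop).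
Hypotheses (hA : inF M A) (hB : inF M B) (hAB : forall w, A w -> B w).

Lemma upd_prob_one_of_prob_eq : Pr A = Pr B ->
  forall Q, Upd M (single Pr) B Q -> Q A = 1.
Proof.
  intros HPA Q HQ.
  pose proof (inF_compl M B hB) as HnB.
  assert (HC : inF M (fun w => A w \/ ~ B w)) by (apply inF_union; assumption).
  assert (HPC : Pr (fun w => A w \/ ~ B w) = 1).
  { rewrite p_add, prob_compl by (assumption || firstorder); lra. }
  rewrite (upd_inter_full _ _ _ _ hB HC (single_full _ _ _ HPC)) in HQ.
  replace (fun w => (A w \/ ~ B w) /\ B w) with A in HQ.
  - exact (H1 _ _ _ hA _ HQ).
  - apply set_ext; intro w; split; [intro; auto | tauto].
Qed.

Lemma upd_prob_zero_of_null : Pr A = 0 ->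
  forall Q, Upd M (single Pr) B Q -> Q A = 0.
Proof.
  intros HPA Q HQ.
  assert (HnA : inF M (fun w => ~ A w)) by (apply inF_compl; assumption).
  assert (HPnA : Pr (fun w => ~ A w) = 1) by (rewrite prob_compl by assumption; lra).
  rewrite (upd_inter_full _ _ _ _ hB HnA (single_full _ _ _ HPnA)) in HQ.
  pose proof (inF_inter M _ _ HnA hB) as HnAB.
  apply (prob_disjoint_of_full _ Q _ _ HnAB hA); [tauto |].
  exact (H1 _ _ _ HnAB _ HQ).
Qed.

End UpdateFacts.

Theorem lemma4p6 (Upd : UpdFamily) (HU : is_update_family Upd)
  (H1 : P1 Upd) (H3 : P3 Upd) (H4 : P4 Upd)
  (M : MeasureSpace) (Pr : prob M) (A B : carrier M -> Prop)
  (hA : inF M A) (hB : inF M B) (hAB : forall w, A w -> B w) :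
  (cond Pr A B = 1 -> forall Q, Upd M (single Pr) B Q -> Q A = 1) /\
  (cond Pr A B = 0 -> forall Q, Upd M (single Pr) B Q -> Q A = 0).
Proof.
  rewrite cond_subset by assumption.
  destruct (Req_dec (Pr B) 0) as [HB0 | HB0].
  { rewrite upd_single_null by assumption; split; intros _ Q []. }
  split; intro Hc.
  - apply upd_prob_one_of_prob_eq; try assumption.
    apply (Rmult_eq_reg_r (/ Pr B)); [| apply Rinv_neq_0_compat; assumption].
    unfold Rdiv in Hc; rewrite Hc, Rinv_r; auto.
  - apply upd_prob_zero_of_null; try assumption.
    unfold Rdiv in Hc; apply Rmult_integral in Hc as [|Hinv]; [assumption |].
    exfalso; exact (Rinv_neq_0_compat _ HB0 Hinv).
Qed.
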